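(* Let $g\in\mathrm{Lip}(\mathbb{R})$ satisfy $g(x)\ge g(-1)$ for all $x\in\mathbb{R}$ and $g(x)\ge x+1+g(-1)$ for all $x\in[-1,0]$. For $\varepsilon>0$ let $u^\varepsilon$ be the viscosity solution of $u^\varepsilon_t+u^\varepsilon_x=\varepsilon u^\varepsilon_{xx}$ in $\mathbb{R}\times(0,\infty)$, $u^\varepsilon(\cdot,0)=g$, and let $u$ be the viscosity solution of $u_t+u_x=0$ in $\mathbb{R}\times(0,\infty)$, $u(\cdot,0)=g$. Then for every $\varepsilon\in(0,\tfrac14)$, \[ |u^\varepsilon(0,1)-u(0,1)|=u^\varepsilon(0,1)-g(-1)\ge\frac{\mathrm{e}-1}{\sqrt{\pi}\,\mathrm{e}}\sqrt{\varepsilon}. \] *)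

From Stdlib Require Import Reals Lra.
From Coquelicot Require Import Coquelicot.
Open Scope R_scope.

(* Functions of two real variables (x, t) are curried: f : R -> R -> R. *)

Definition Lipschitz (g : R -> R) : Prop :=
  exists L : R, forall x y : R, Rabs (g x - g y) <= L * Rabs (x - y).

Definition cont2_within (P : R -> Prop) (f : R -> R -> R) (x0 t0 : R) : Prop :=
  forall e : R, 0 < e -> exists d : R, 0 < d /\
    forall x t : R, P t -> Rabs (x - x0) < d -> Rabs (t - t0) < d ->
      Rabs (f x t - f x0 t0) < e.

Definition cont2 (f : R -> R -> R) (x0 t0 : R) : Prop :=
  cont2_within (fun _ => True) f x0 t0.

Definition Dx (f : R -> R -> R) : R -> R -> R := fun x t => Derive (fun y => f y t) x.
Definition Dt (f : R -> R -> R) : R -> R -> R := fun x t => Derive (fun s => f x s) t.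

Definition C2 (phi : R -> R -> R) : Prop :=
  (forall x t, ex_derive (fun y => phi y t) x) /\
  (forall x t, ex_derive (fun s => phi x s) t) /\
  (forall x t, ex_derive (fun y => Dx phi y t) x) /\
  (forall x t, ex_derive (fun s => Dx phi x s) t) /\
  (forall x t, ex_derive (fun y => Dt phi y t) x) /\
  (forall x t, ex_derive (fun s => Dt phi x s) t) /\
  (forall x t, cont2 phi x t /\ cont2 (Dx phi) x t /\ cont2 (Dt phi) x t /\
               cont2 (Dx (Dx phi)) x t /\ cont2 (Dt (Dx phi)) x t /\
               cont2 (Dx (Dt phi)) x t /\ cont2 (Dt (Dt phi)) x t).

Definition loc_max (f : R -> R -> R) (x0 t0 : R) : Prop :=
  exists d : R, 0 < d /\ forall x t : R, 0 < t -> Rabs (x - x0) < d ->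
    Rabs (t - t0) < d -> f x t <= f x0 t0.
Definition loc_min (f : R -> R -> R) (x0 t0 : R) : Prop :=
  exists d : R, 0 < d /\ forall x t : R, 0 < t -> Rabs (x - x0) < d ->
    Rabs (t - t0) < d -> f x0 t0 <= f x t.

Definition visc_subsol (eps : R) (u : R -> R -> R) : Prop :=
  forall phi x0 t0, C2 phi -> 0 < t0 ->
    loc_max (fun x t => u x t - phi x t) x0 t0 ->
    Dt phi x0 t0 + Dx phi x0 t0 - eps * Dx (Dx phi) x0 t0 <= 0.
Definition visc_supersol (eps : R) (u : R -> R -> R) : Prop :=
  forall phi x0 t0, C2 phi -> 0 < t0 ->
    loc_min (fun x t => u x t - phi x t) x0 t0 ->
    Dt phi x0 t0 + Dx phi x0 t0 - eps * Dx (Dx phi) x0 t0 >= 0.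

(* u is "the" viscosity solution of the Cauchy problem with initial datum g:
   continuous on R x [0,oo), u(.,0) = g, viscosity sub- and supersolution in
   R x (0,oo), and in the standard uniqueness class (at most linear growth). *)
Definition visc_solution (eps : R) (g : R -> R) (u : R -> R -> R) : Prop :=
  (forall x t, 0 <= t -> cont2_within (fun s => 0 <= s) u x t) /\
  (forall x, u x 0 = g x) /\
  visc_subsol eps u /\ visc_supersol eps u /\
  (exists C : R, forall x t, 0 <= t -> Rabs (u x t) <= C * (1 + Rabs x + t)).

(* Everything rests on one comparison principle: a viscosity subsolution of growth at most
   linear lies below any function that is touched from above, at every point, by paraboloids
   on which u_t + u_x - eps u_xx is nonnegative; the proof penalises with a quadratic in
   (x, t) and maximises over a compact rectangle.  For the transport equation the barriers
   g(y) + L sqrt ((x - t - y)^2 + d^2) give u(x, t) <= g(x - t), and g >= g(-1) gives the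
   reverse bound at (0, 1), so u(0, 1) = g(-1).  For the viscous problem, the hypotheses make
   g - g(-1) dominate the truncated ramp (x + 1) 1_[-1,0](x) up to errors controlled by the
   Lipschitz constant.  The ramp evolves explicitly under u_t + u_x = eps u_xx through a
   Gaussian of width sqrt (4 eps t); starting it at a small time tau > 0 keeps it smooth and
   costs O(sqrt (eps tau)).  Its value at (0, 1) is
   sqrt (eps (1 + tau)) (1 - exp (-1 / (4 eps (1 + tau)))) / sqrt PI, and since eps < 1/4 the
   exponent stays below -1 for small tau, which leaves room for the error terms. *)

From Pilot Require Import Defs.
From Stdlib Require Import Reals Lra FunctionalExtensionality.
From Coquelicot Require Import Coquelicot.
Open Scope R_scope.

Module RectangleMax.
From HB Require Import structures.
From mathcomp Require Import all_boot all_order all_algebra.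
From mathcomp Require Import all_classical all_reals topology normedtype derive.
From mathcomp Require Import Rstruct Rstruct_topology.
Import Order.TTheory GRing.Theory Num.Theory numFieldNormedType.Exports.
Local Open Scope classical_set_scope.

Lemma cont2_within_rectangle_max (F : R -> R -> R) (a b c d : R) :
  Rle a b -> Rle c d ->
  (forall x t, Rle a x /\ Rle x b -> Rle c t /\ Rle t d ->
     cont2_within (fun s => Rle c s) F x t) ->
  exists x0 t0, (Rle a x0 /\ Rle x0 b) /\ (Rle c t0 /\ Rle t0 d) /\
    forall x t, Rle a x /\ Rle x b -> Rle c t /\ Rle t d -> Rle (F x t) (F x0 t0).
Proof.
move=> ab cd Fc.
pose A : set (R * R)%type := `[a, b] `*` `[c, d].
have inA x t : Rle a x /\ Rle x b -> Rle c t /\ Rle t d -> A (x, t).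
  by move=> [? ?] [? ?]; split; rewrite /= in_itv /=; apply/andP; split; apply/RleP.
have ofA x t : A (x, t) -> (Rle a x /\ Rle x b) /\ (Rle c t /\ Rle t d).
  by rewrite /A /= !in_itv /= => -[/andP[/RleP ? /RleP ?] /andP[/RleP ? /RleP ?]].
have A0 : A !=set0 by exists (a, c); apply: inA; split=> //; exact: Rle_refl.
have cA : compact A by apply: compact_setX; apply: segment_compact.
have cF : {within A, continuous (fun p : R * R => F p.1 p.2)}.
  apply/subspace_continuousP => -[x t] /= /(ofA x t) [hx ht].
  apply/(@cvgrPdist_lt _ R^o) => e /RltP e0.
  have [del [/RltP del0 hdel]] := Fc x t hx ht e e0.
  rewrite near_withinE; exists (ball x del, ball t del); first by split; exact: nbhsx_ballx.
  move=> [y s] [/= /RltP hy /RltP hs] /(ofA y s) [_ [hs0 _]].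
  rewrite -RabsE in hy hs; apply/RltP; rewrite -RabsE Rabs_minus_sym.
  by apply: hdel => //; rewrite Rabs_minus_sym.
have [[x0 t0] /set_mem /(ofA x0 t0) [hx0 ht0] hmax] := compact_EVT_max A0 cA cF.
exists x0, t0; do 2!split=> //.
by move=> x t hx ht; apply/RleP; apply: (hmax (x, t)); rewrite inE; exact: inA.
Qed.

End RectangleMax.

Lemma exp_le_compat x y : x <= y -> exp x <= exp y.
Proof. intros [H|H]; [left; now apply exp_increasing|now rewrite H; right]. Qed.

Lemma is_derive_val (f : R -> R) x l l' : is_derive f x l -> l = l' -> is_derive f x l'.
Proof. now intros H <-. Qed.

Lemma continuous_of_derive (f : R -> R) x : ex_derive f x -> continuous f x.
Proof. exact (@ex_derive_continuous R_AbsRing R_NormedModule f x). Qed.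

Lemma derive_local_lipschitz (f : R -> R) s0 : ex_derive f s0 ->
  exists d K, 0 < d /\ 0 <= K /\
    forall s, Rabs (s - s0) < d -> Rabs (f s - f s0) <= K * Rabs (s - s0).
Proof.
  intros [l Hl]. apply is_derive_Reals in Hl.
  destruct (Hl 1 ltac:(lra)) as [[d Hd] Hquot].
  exists d, (Rabs l + 1). split; [auto|split; [pose proof (Rabs_pos l); lra|]].
  intros s Hs. destruct (Req_dec s s0) as [->|Hne].
  - rewrite !Rminus_diag, Rabs_R0. lra.
  - specialize (Hquot (s - s0) ltac:(lra) Hs). replace (s0 + (s - s0)) with s in Hquot by ring.
    assert (Hn : 0 < Rabs (s - s0)) by (apply Rabs_pos_lt; lra).
    replace (f s - f s0) with (((f s - f s0) / (s - s0) - l) * (s - s0) + l * (s - s0))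
      by (field; lra).
    eapply Rle_trans; [apply Rabs_triang|]. rewrite !Rabs_mult.
    assert (Rabs ((f s - f s0) / (s - s0) - l) * Rabs (s - s0) <= 1 * Rabs (s - s0))
      by (apply Rmult_le_compat_r; lra).
    lra.
Qed.

Lemma MVT_between (f df : R -> R) a b :
  (forall c, Rmin a b <= c <= Rmax a b -> is_derive f c (df c)) ->
  exists c, Rmin a b <= c <= Rmax a b /\ f b - f a = df c * (b - a).
Proof.
  intros Hd. apply MVT_gen; [intros; apply Hd; lra|].
  intros c Hc. apply continuity_pt_filterlim, continuous_of_derive. eexists; now apply Hd.
Qed.

Lemma taylor2_lower (f f1 f2 : R -> R) z0 z m :
  (forall x, is_derive f x (f1 x)) -> (forall x, is_derive f1 x (f2 x)) ->
  (forall c, Rmin z0 z <= c <= Rmax z0 z -> m <= f2 c) ->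
  m / 2 * (z - z0) ^ 2 <= f z - f z0 - f1 z0 * (z - z0).
Proof.
  intros Hf Hf1 Hm.
  destruct (MVT_between (fun x => f x - f1 z0 * x - m / 2 * (x - z0) ^ 2)
              (fun x => f1 x - f1 z0 - m * (x - z0)) z0 z) as (c & Hc & Ec).
  { intros x _. auto_derive; [eexists; apply Hf|].
    replace (Derive (fun y : R => f y) x) with (f1 x) by (symmetry; apply is_derive_unique, Hf).
    field. }
  destruct (MVT_between (fun x => f1 x - m * x) (fun x => f2 x - m) z0 c) as (c' & Hc' & Ec').
  { intros x _. auto_derive; [eexists; apply Hf1|].
    replace (Derive (fun y : R => f1 y) x) with (f2 x) by (symmetry; apply is_derive_unique, Hf1).
    ring. }
  assert (Hm' : m <= f2 c').
  { apply Hm. unfold Rmin, Rmax in *. destruct (Rle_dec z0 z), (Rle_dec z0 c); lra. }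
  assert (Hsg : 0 <= (c - z0) * (z - z0)).
  { unfold Rmin, Rmax in Hc. destruct (Rle_dec z0 z); nra. }
  assert (Hder : f1 c - f1 z0 - m * (c - z0) = (f2 c' - m) * (c - z0)) by lra.
  rewrite Hder in Ec.
  assert (0 <= (f2 c' - m) * ((c - z0) * (z - z0))) by (apply Rmult_le_pos; lra).
  nra.
Qed.

Lemma Rabs_between_le a b c : Rmin a b <= c <= Rmax a b -> Rabs (c - a) <= Rabs (b - a).
Proof.
  unfold Rmin, Rmax. intros Hc. destruct (Rle_dec a b).
  - rewrite !Rabs_right; lra.
  - rewrite !Rabs_left1; lra.
Qed.

Lemma lipschitz_derivative_lower (f fs : R -> R) s0 d K : 0 <= K ->
  (forall s, Rabs (s - s0) < d -> is_derive f s (fs s)) ->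
  (forall s, Rabs (s - s0) < d -> Rabs (fs s - fs s0) <= K * Rabs (s - s0)) ->
  forall s, Rabs (s - s0) < d -> fs s0 * (s - s0) - K * (s - s0) ^ 2 <= f s - f s0.
Proof.
  intros HK Hf Hfs s Hs.
  destruct (MVT_between f fs s0 s) as (c & Hc & Ec).
  { intros c Hc. apply Hf. pose proof (Rabs_between_le _ _ _ Hc). lra. }
  pose proof (Rabs_between_le _ _ _ Hc) as Hcs.
  assert (Hq : Rabs ((fs c - fs s0) * (s - s0)) <= K * (s - s0) ^ 2).
  { rewrite Rabs_mult, <- pow2_abs. simpl. rewrite Rmult_1_r, <- Rmult_assoc.
    apply Rmult_le_compat_r; [apply Rabs_pos|].
    eapply Rle_trans; [apply Hfs; lra|]. now apply Rmult_le_compat_l. }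
  apply Rabs_le_between in Hq. rewrite Ec. lra.
Qed.

Lemma young_weighted a b th : 0 < th -> 2 * (a * b) <= th * a ^ 2 + b ^ 2 / th.
Proof.
  intros Hth. pose proof (pow2_ge_0 (th * a - b)).
  apply (Rmult_le_reg_l th); [lra|]. field_simplify; [nra|lra].
Qed.

Lemma mixed_term_le dx dt th : 0 < th ->
  Rabs (dx - dt) * Rabs dt <= th * dx ^ 2 + (1 + / th) * dt ^ 2.
Proof.
  intros Hth.
  assert (Hcross : Rabs (dx - dt) * Rabs dt <= Rabs dx * Rabs dt + dt ^ 2).
  { rewrite <- pow2_abs. simpl. rewrite Rmult_1_r, <- Rmult_plus_distr_r.
    apply Rmult_le_compat_r; [apply Rabs_pos|].
    unfold Rminus. eapply Rle_trans; [apply Rabs_triang|]. rewrite Rabs_Ropp. lra. }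
  pose proof (young_weighted (Rabs dx) (Rabs dt) th Hth) as Hyoung.
  rewrite !pow2_abs in Hyoung.
  assert (0 <= th * dx ^ 2) by (apply Rmult_le_pos; [lra|apply pow2_ge_0]).
  assert (0 <= dt ^ 2 / th) by (apply Rdiv_le_0_compat; [apply pow2_ge_0|lra]).
  replace ((1 + / th) * dt ^ 2) with (dt ^ 2 + dt ^ 2 / th) by (field; lra).
  lra.
Qed.

Lemma sqrt_le_1_plus y : 0 <= y -> sqrt y <= 1 + y.
Proof.
  intros Hy. pose proof (sqrt_sqrt y Hy). pose proof (sqrt_pos y).
  pose proof (pow2_ge_0 (sqrt y - 1)). nra.
Qed.

Lemma sqrt_tangent_bound z z0 d : 0 < d ->
  sqrt (z ^ 2 + d ^ 2) <= sqrt (z0 ^ 2 + d ^ 2) + z0 / sqrt (z0 ^ 2 + d ^ 2) * (z - z0)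
    + (z - z0) ^ 2 / (2 * sqrt (z0 ^ 2 + d ^ 2)).
Proof.
  intros Hd.
  assert (Hs0 : 0 < sqrt (z0 ^ 2 + d ^ 2)) by (apply sqrt_lt_R0; nra).
  pose proof (sqrt_sqrt (z0 ^ 2 + d ^ 2) ltac:(nra)) as E0.
  pose proof (sqrt_sqrt (z ^ 2 + d ^ 2) ltac:(nra)) as E.
  set (s0 := sqrt (z0 ^ 2 + d ^ 2)) in *. set (s := sqrt (z ^ 2 + d ^ 2)) in *.
  clearbody s0 s.
  (* the bound is [2 s s0 <= s^2 + s0^2] after multiplying by [2 s0] *)
  pose proof (pow2_ge_0 (s - s0)).
  apply (Rmult_le_reg_r (2 * s0)); [lra|].
  replace ((s0 + z0 / s0 * (z - z0) + (z - z0) ^ 2 / (2 * s0)) * (2 * s0))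
    with (s * s + s0 * s0) by (field_simplify; [nra|lra]).
  nra.
Qed.

Lemma continuity_2d_pt_cont2 f x t : continuity_2d_pt f x t -> cont2 f x t.
Proof.
  intros H e He. destruct (H (mkposreal e He)) as [d Hd].
  exists d. split; [apply cond_pos|]. intros y s _ Hy Hs. now apply Hd.
Qed.

Lemma cont2_within_of_cont2 P f x t : cont2 f x t -> cont2_within P f x t.
Proof.
  intros H e He. destruct (H e He) as [d [Hd Hf]]. exists d. split; auto.
Qed.

Lemma cont2_within_minus P f g x t :
  cont2_within P f x t -> cont2_within P g x t ->
  cont2_within P (fun y s => f y s - g y s) x t.
Proof.
  intros Hf Hg e He.
  destruct (Hf (e / 2) ltac:(lra)) as [d1 [Hd1 H1]].
  destruct (Hg (e / 2) ltac:(lra)) as [d2 [Hd2 H2]].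
  exists (Rmin d1 d2). split; [now apply Rmin_pos|].
  intros y s Hs Hy Hts.
  apply Rmin_Rgt in Hy as [Hy1 Hy2]. apply Rmin_Rgt in Hts as [Ht1 Ht2].
  specialize (H1 y s Hs Hy1 Ht1). specialize (H2 y s Hs Hy2 Ht2).
  replace (f y s - g y s - (f x t - g x t)) with ((f y s - f x t) - (g y s - g x t)) by ring.
  eapply Rle_lt_trans; [apply Rabs_triang|]. rewrite Rabs_Ropp. lra.
Qed.

Lemma cont2_within_opp P f x t :
  cont2_within P f x t -> cont2_within P (fun y s => - f y s) x t.
Proof.
  intros H e He. destruct (H e He) as [d [Hd Hf]]. exists d. split; auto.
  intros y s Hs Hy Hts. replace (- f y s - - f x t) with (- (f y s - f x t)) by ring.
  rewrite Rabs_Ropp. auto.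
Qed.

Ltac continuity_2d :=
  repeat first
   [ apply continuity_2d_pt_plus | apply continuity_2d_pt_minus
   | apply continuity_2d_pt_mult | apply continuity_2d_pt_opp
   | apply continuity_2d_pt_id1 | apply continuity_2d_pt_id2
   | apply continuity_2d_pt_const ].

Definition affine (p q r x0 t0 x t : R) : R := p + q * (x - x0) + r * (t - t0).

Definition paraboloid (B C D E F x0 t0 x t : R) : R :=
  B * (x - x0) + C * (x - x0) ^ 2 + D * (t - t0) + E * (t - t0) ^ 2
  + F * ((x - x0) * (t - t0)).

Lemma Dx_affine p q r x0 t0 : Defs.Dx (affine p q r x0 t0) = fun _ _ => q.
Proof.
  do 2 (apply functional_extensionality; intro). unfold Defs.Dx, affine.
  apply is_derive_unique. auto_derive; auto. ring.
Qed.

Lemma Dt_affine p q r x0 t0 : Defs.Dt (affine p q r x0 t0) = fun _ _ => r.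
Proof.
  do 2 (apply functional_extensionality; intro). unfold Defs.Dt, affine.
  apply is_derive_unique. auto_derive; auto. ring.
Qed.

Lemma Dx_paraboloid a B C D E F x0 t0 :
  Defs.Dx (fun x t => a + paraboloid B C D E F x0 t0 x t) = affine B (2 * C) F x0 t0.
Proof.
  do 2 (apply functional_extensionality; intro). unfold Defs.Dx, paraboloid, affine.
  apply is_derive_unique. auto_derive; auto. ring.
Qed.

Lemma Dt_paraboloid a B C D E F x0 t0 :
  Defs.Dt (fun x t => a + paraboloid B C D E F x0 t0 x t) = affine D F (2 * E) x0 t0.
Proof.
  do 2 (apply functional_extensionality; intro). unfold Defs.Dt, paraboloid, affine.
  apply is_derive_unique. auto_derive; auto. ring.
Qed.

Lemma C2_paraboloid a B C D E F x0 t0 :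
  C2 (fun x t => a + paraboloid B C D E F x0 t0 x t).
Proof.
  unfold C2. rewrite Dx_paraboloid, Dt_paraboloid, !Dx_affine, !Dt_affine.
  repeat split; intros;
    try (unfold paraboloid, affine; auto_derive; auto; fail);
    apply continuity_2d_pt_cont2; unfold paraboloid, affine; continuity_2d.
Qed.

Lemma subsol_paraboloid eps U x0 t0 B C D E F d :
  visc_subsol eps U -> 0 < t0 -> 0 < d ->
  (forall x t, 0 < t -> Rabs (x - x0) < d -> Rabs (t - t0) < d ->
     U x t - U x0 t0 <= paraboloid B C D E F x0 t0 x t) ->
  D + B - eps * (2 * C) <= 0.
Proof.
  intros HU Ht0 Hd Hmaj.
  assert (Hmax : loc_max (fun x t => U x t
                   - (U x0 t0 + paraboloid B C D E F x0 t0 x t)) x0 t0).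
  { exists d. split; auto. intros x t Ht Hx Hts. specialize (Hmaj x t Ht Hx Hts).
    unfold paraboloid in *. ring_simplify. lra. }
  specialize (HU _ x0 t0 (C2_paraboloid _ _ _ _ _ _ _ _) Ht0 Hmax).
  rewrite Dx_paraboloid, Dt_paraboloid, Dx_affine in HU. unfold affine in HU.
  ring_simplify in HU. lra.
Qed.

Lemma Dx_opp f : Defs.Dx (fun x t => - f x t) = fun x t => - Defs.Dx f x t.
Proof. do 2 (apply functional_extensionality; intro). apply Derive_opp. Qed.

Lemma Dt_opp f : Defs.Dt (fun x t => - f x t) = fun x t => - Defs.Dt f x t.
Proof. do 2 (apply functional_extensionality; intro). apply Derive_opp. Qed.

Lemma ex_derive_opp (f : R -> R) x : ex_derive f x -> ex_derive (fun y => - f y) x.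
Proof. intros [l H]. exists (- l). now apply (is_derive_opp f). Qed.

Lemma C2_opp phi : C2 phi -> C2 (fun x t => - phi x t).
Proof.
  intros (h1 & h2 & h3 & h4 & h5 & h6 & h7). unfold C2.
  repeat rewrite ?Dx_opp, ?Dt_opp.
  repeat split; intros; try (apply ex_derive_opp; auto);
    destruct (h7 x t) as (? & ? & ? & ? & ? & ? & ?); now apply cont2_within_opp.
Qed.

Lemma visc_supersol_opp eps u : visc_supersol eps u -> visc_subsol eps (fun x t => - u x t).
Proof.
  intros Hu phi x0 t0 Hphi Ht0 [d [Hd Hmax]].
  assert (Hmin : loc_min (fun x t => u x t - - phi x t) x0 t0).
  { exists d. split; auto. intros x t Ht Hx Hts. specialize (Hmax x t Ht Hx Hts). lra. }
  specialize (Hu _ x0 t0 (C2_opp _ Hphi) Ht0 Hmin).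
  rewrite Dt_opp, !Dx_opp in Hu. lra.
Qed.

(* Super-jet form of [f_t + f_x - eps f_xx >= m] at [(x0, t0)]; a C^2 function satisfying
   the inequality classically has it. *)
Definition paraboloid_supersol (eps m : R) (f : R -> R -> R) (x0 t0 : R) : Prop :=
  forall k, 0 < k -> exists B C D E F d, 0 < d /\ m - k <= D + B - eps * (2 * C) /\
    forall x t, Rabs (x - x0) < d -> Rabs (t - t0) < d ->
      f x t - f x0 t0 <= paraboloid B C D E F x0 t0 x t.

Lemma paraboloid_supersol_add eps m1 m2 f g x0 t0 :
  paraboloid_supersol eps m1 f x0 t0 -> paraboloid_supersol eps m2 g x0 t0 ->
  paraboloid_supersol eps (m1 + m2) (fun x t => f x t + g x t) x0 t0.
Proof.
  intros Hf Hg k Hk.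
  destruct (Hf (k / 2) ltac:(lra)) as (B1 & C1 & D1 & E1 & F1 & d1 & Hd1 & Hm1 & H1).
  destruct (Hg (k / 2) ltac:(lra)) as (B2 & C2 & D2 & E2 & F2 & d2 & Hd2 & Hm2 & H2).
  exists (B1 + B2), (C1 + C2), (D1 + D2), (E1 + E2), (F1 + F2), (Rmin d1 d2).
  split; [now apply Rmin_pos|split; [lra|]].
  intros x t Hx Ht. apply Rmin_Rgt in Hx as [Hx1 Hx2]. apply Rmin_Rgt in Ht as [Ht1 Ht2].
  specialize (H1 x t Hx1 Ht1). specialize (H2 x t Hx2 Ht2).
  unfold paraboloid in *. lra.
Qed.

Lemma paraboloid_supersol_const eps c x0 t0 : paraboloid_supersol eps 0 (fun _ _ => c) x0 t0.
Proof.
  intros k Hk. exists 0, 0, 0, 0, 0, 1. repeat split; try lra.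
  intros x t _ _. unfold paraboloid. lra.
Qed.

(* The [(1 + 2 eps) t] term makes the operator value [a (2 t + 1)], positive for every
   [eps >= 0]. *)
Definition penalty (eps a x t : R) : R := a * ((x - t) ^ 2 + t ^ 2 + (1 + 2 * eps) * t).

Lemma penalty_supersol eps a x0 t0 : 0 <= a -> 0 <= t0 ->
  paraboloid_supersol eps a (penalty eps a) x0 t0.
Proof.
  intros Ha Ht0 k Hk.
  exists (2 * a * (x0 - t0)), a, (a * (2 * t0 - 2 * (x0 - t0) + 1 + 2 * eps)), (2 * a),
    (- 2 * a), 1.
  repeat split; [lra|nra|].
  intros x t _ _. unfold penalty, paraboloid. right. ring.
Qed.

Lemma penalty_dominates eps a C x t : 0 <= eps -> 0 < a -> 0 <= C -> 0 <= t ->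
  12 * C / a + 1 <= Rabs x + t -> C * (1 + Rabs x + t) < penalty eps a x t.
Proof.
  intros He Ha HC Ht Hr. unfold penalty.
  replace (1 + Rabs x + t) with (1 + (Rabs x + t)) by ring.
  set (rho := Rabs x + t) in *.
  assert (Hrho : rho * rho <= 6 * ((x - t) ^ 2 + t ^ 2)).
  { unfold rho. pose proof (Rabs_pos x). pose proof (pow2_abs x).
    pose proof (pow2_ge_0 (Rabs x - t)). pose proof (pow2_ge_0 (x - 3 / 2 * t)). nra. }
  assert (Harho : 12 * C < a * rho).
  { apply (Rmult_le_compat_l a) in Hr; [|lra].
    replace (a * (12 * C / a + 1)) with (12 * C + a) in Hr by (field; lra). lra. }
  assert (Hrho1 : 1 <= rho).
  { assert (0 <= 12 * C / a) by (apply Rdiv_le_0_compat; lra). lra. }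
  assert (HC1 : C * (1 + rho) <= 2 * C * rho) by nra.
  assert (H12 : 12 * C * rho < a * rho * rho) by (apply Rmult_lt_compat_r; lra).
  assert (a * (rho * rho) <= a * (6 * ((x - t) ^ 2 + t ^ 2)))
    by (apply Rmult_le_compat_l; lra).
  assert (0 <= a * ((1 + 2 * eps) * t)) by (apply Rmult_le_pos; nra).
  lra.
Qed.

Lemma penalty_small eps x t m : 0 <= eps -> 0 <= t -> 0 < m ->
  exists a, 0 < a /\ penalty eps a x t < m.
Proof.
  intros He Ht Hm.
  assert (Hp1 : 0 <= penalty eps 1 x t).
  { unfold penalty. pose proof (pow2_ge_0 (x - t)). pose proof (pow2_ge_0 t). nra. }
  exists (m / (1 + penalty eps 1 x t)). split; [apply Rdiv_lt_0_compat; lra|].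
  replace (penalty eps _ x t) with (m / (1 + penalty eps 1 x t) * penalty eps 1 x t)
    by (unfold penalty; ring).
  apply (Rmult_lt_reg_r (1 + penalty eps 1 x t)); [lra|]. field_simplify; nra.
Qed.

Lemma halfplane_max F R0 x1 t1 : 0 <= t1 -> 0 <= F x1 t1 ->
  (forall x t, 0 <= t -> cont2_within (fun s => 0 <= s) F x t) ->
  (forall x t, 0 <= t -> R0 <= Rabs x \/ R0 <= t -> F x t < 0) ->
  exists x0 t0, 0 <= t0 /\ forall x t, 0 <= t -> F x t <= F x0 t0.
Proof.
  intros Ht1 HF1 HFc Hout.
  assert (Hin : forall x t, 0 <= t -> 0 <= F x t -> - R0 <= x <= R0 /\ t <= R0).
  { intros x t Ht HF. destruct (Rlt_or_le (Rabs x) R0) as [Hx|Hx];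
      [destruct (Rlt_or_le t R0)|]; try (specialize (Hout x t Ht ltac:(auto)); lra).
    apply Rabs_lt_between in Hx. lra. }
  destruct (Hin x1 t1 Ht1 HF1) as [Hx1 Htr].
  destruct (RectangleMax.cont2_within_rectangle_max F (- R0) R0 0 R0)
    as (x0 & t0 & _ & [Ht0 _] & Hmax); try lra.
  { intros x t _ [Ht _]. auto. }
  exists x0, t0. split; auto. intros x t Ht.
  destruct (Rle_or_lt 0 (F x t)) as [HF|HF].
  - destruct (Hin x t Ht HF). apply Hmax; lra.
  - pose proof (Hmax x1 t1 Hx1 (conj Ht1 Htr)). lra.
Qed.

Theorem visc_comparison eps U Phi : 0 <= eps ->
  (forall x t, 0 <= t -> cont2_within (fun s => 0 <= s) U x t) ->
  (forall x t, 0 <= t -> cont2_within (fun s => 0 <= s) Phi x t) ->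
  (exists C, forall x t, 0 <= t -> U x t - Phi x t <= C * (1 + Rabs x + t)) ->
  visc_subsol eps U ->
  (forall x0 t0, 0 < t0 -> paraboloid_supersol eps 0 Phi x0 t0) ->
  (forall x, U x 0 <= Phi x 0) ->
  forall x t, 0 <= t -> U x t <= Phi x t.
Proof.
  intros He HUc HPhic [C0 HC0] HU HPhi Hinit x1 t1 Ht1.
  apply Rnot_lt_le. intros Hlt.
  assert (HC : forall x t, 0 <= t -> U x t - Phi x t <= Rabs C0 * (1 + Rabs x + t)).
  { intros x t Ht. eapply Rle_trans; [apply HC0; auto|]. apply Rmult_le_compat_r;
      [pose proof (Rabs_pos x); lra|apply Rle_abs]. }
  destruct (penalty_small eps x1 t1 ((U x1 t1 - Phi x1 t1) / 2) He Ht1 ltac:(lra))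
    as (a & Ha & Hpa).
  destruct (halfplane_max (fun x t => U x t - Phi x t - penalty eps a x t)
              (12 * Rabs C0 / a + 1) x1 t1) as (x0 & t0 & Ht0 & Hmax); auto.
  - lra.
  - intros x t Ht. apply cont2_within_minus; [apply cont2_within_minus; auto|].
    apply cont2_within_of_cont2, continuity_2d_pt_cont2. unfold penalty. continuity_2d.
  - intros x t Ht Hfar.
    pose proof (penalty_dominates eps a (Rabs C0) x t He Ha (Rabs_pos C0) Ht) as Hdom.
    specialize (HC x t Ht). pose proof (Rabs_pos x). destruct Hfar; nra.
  - pose proof (Hmax x1 t1 Ht1) as Hmax1. cbv beta in Hmax1.
    assert (Ht0pos : 0 < t0).
    { destruct Ht0 as [|<-]; auto. specialize (Hinit x0).
      assert (0 <= penalty eps a x0 0).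
      { unfold penalty. pose proof (pow2_ge_0 (x0 - 0)). nra. }
      lra. }
    destruct (paraboloid_supersol_add eps 0 a _ _ x0 t0 (HPhi x0 t0 Ht0pos)
                (penalty_supersol eps a x0 t0 (Rlt_le _ _ Ha) Ht0) (a / 2) ltac:(lra))
      as (B & C & D & E & F & d & Hd & Hop & Hmaj).
    assert (D + B - eps * (2 * C) <= 0); [|lra].
    apply (subsol_paraboloid eps U x0 t0 B C D E F d HU Ht0pos Hd).
    intros x t Ht Hx Hts. specialize (Hmaj x t Hx Hts). specialize (Hmax x t (Rlt_le _ _ Ht)).
    cbv beta in *. lra.
Qed.

Lemma Lipschitz_pos g : Lipschitz g ->
  exists L, 0 < L /\ forall x y, Rabs (g x - g y) <= L * Rabs (x - y).
Proof.
  intros [L0 HL0]. exists (Rabs L0 + 1). split; [pose proof (Rabs_pos L0); lra|].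
  intros x y. eapply Rle_trans; [apply HL0|]. apply Rmult_le_compat_r; [apply Rabs_pos|].
  pose proof (Rle_abs L0). lra.
Qed.

Lemma linear_growth_abs f C x t : 0 <= t ->
  Rabs (f x t) <= C * (1 + Rabs x + t) -> forall c,
  Rabs (f x t) + Rabs c <= (C + Rabs c) * (1 + Rabs x + t).
Proof.
  intros Ht Hf c. pose proof (Rabs_pos x). pose proof (Rabs_pos c).
  assert (Rabs c <= Rabs c * (1 + Rabs x + t)) by nra. lra.
Qed.

Lemma visc_solution_ge eps g u c : 0 <= eps -> visc_solution eps g u ->
  (forall x, c <= g x) -> forall x t, 0 <= t -> c <= u x t.
Proof.
  intros He (Hc & H0 & _ & Hsup & C & HC) Hg x t Ht.
  enough (- u x t <= - c) by lra.
  apply (visc_comparison eps (fun x t => - u x t) (fun _ _ => - c)); auto.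
  - intros; apply cont2_within_opp; auto.
  - intros; apply cont2_within_of_cont2, continuity_2d_pt_cont2, continuity_2d_pt_const.
  - exists (C + Rabs c). intros y s Hs.
    pose proof (linear_growth_abs u C y s Hs (HC y s Hs) c).
    pose proof (Rle_abs (- u y s)). pose proof (Rle_abs c). rewrite Rabs_Ropp in *. lra.
  - now apply visc_supersol_opp.
  - intros; apply paraboloid_supersol_const.
  - intros y. rewrite H0. specialize (Hg y). lra.
Qed.

Lemma sqrt_barrier_supersol a L y d x0 t0 : 0 <= L -> 0 < d ->
  paraboloid_supersol 0 0 (fun x t => a + L * sqrt ((x - t - y) ^ 2 + d ^ 2)) x0 t0.
Proof.
  intros HL Hd k Hk.
  set (z0 := x0 - t0 - y). set (s0 := sqrt (z0 ^ 2 + d ^ 2)).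
  assert (Hs0 : 0 < s0) by (apply sqrt_lt_R0; nra).
  exists (L * z0 / s0), (L / (2 * s0)), (- (L * z0 / s0)), (L / (2 * s0)), (- (L / s0)), 1.
  repeat split; [lra|lra|].
  intros x t _ _.
  pose proof (sqrt_tangent_bound (x - t - y) z0 d Hd) as Hq. fold s0 in Hq.
  replace (x - t - y - z0) with ((x - x0) - (t - t0)) in Hq by (unfold z0; ring).
  apply (Rmult_le_compat_l L) in Hq; [|lra].
  replace (paraboloid _ _ _ _ _ x0 t0 x t)
    with (L * (z0 / s0 * ((x - x0) - (t - t0)) + ((x - x0) - (t - t0)) ^ 2 / (2 * s0)))
    by (unfold paraboloid; field; lra).
  fold z0 s0. clearbody z0 s0. lra.
Qed.

Lemma transport_le g u : Lipschitz g -> visc_solution 0 g u ->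
  forall x t, 0 <= t -> u x t <= g (x - t).
Proof.
  intros Hg (Hc & H0 & Hsub & _ & C & HC) x1 t1 Ht1.
  destruct (Lipschitz_pos g Hg) as (L & HL & HgL).
  apply le_epsilon. intros e He.
  remember (e / L) as d eqn:Ed.
  assert (Hd : 0 < d) by (rewrite Ed; apply Rdiv_lt_0_compat; lra).
  assert (Hbar : u x1 t1 <= g (x1 - t1) + L * sqrt ((x1 - t1 - (x1 - t1)) ^ 2 + d ^ 2)).
  { apply (visc_comparison 0 u
             (fun x t => g (x1 - t1) + L * sqrt ((x - t - (x1 - t1)) ^ 2 + d ^ 2)));
      auto; try lra.
    - intros x t _. apply cont2_within_of_cont2, continuity_2d_pt_cont2. continuity_2d.
      apply continuity_1d_2d_pt_comp; [|continuity_2d].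
      apply continuity_pt_sqrt. pose proof (pow2_ge_0 (x - t - (x1 - t1))). nra.
    - exists (C + Rabs (g (x1 - t1))). intros x t Ht.
      pose proof (linear_growth_abs u C x t Ht (HC x t Ht) (g (x1 - t1))).
      pose proof (Rle_abs (u x t)). pose proof (Rle_abs (- g (x1 - t1))). rewrite Rabs_Ropp in *.
      assert (0 <= L * sqrt ((x - t - (x1 - t1)) ^ 2 + d ^ 2))
        by (apply Rmult_le_pos; [lra|apply sqrt_pos]).
      lra.
    - intros. apply sqrt_barrier_supersol; lra.
    - intros x. rewrite H0. specialize (HgL x (x1 - t1)). apply Rabs_le_between in HgL.
      assert (Hdist : Rabs (x - (x1 - t1)) <= sqrt ((x - 0 - (x1 - t1)) ^ 2 + d ^ 2)).
      { rewrite <- (sqrt_pow2 (Rabs (x - (x1 - t1)))) by apply Rabs_pos. apply sqrt_le_1_alt.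
        rewrite pow2_abs. replace (x - 0) with x by ring. nra. }
      apply (Rmult_le_compat_l L) in Hdist; lra. }
  replace ((x1 - t1 - (x1 - t1)) ^ 2 + d ^ 2) with (d ^ 2) in Hbar by ring.
  rewrite sqrt_pow2 in Hbar by lra.
  rewrite Ed in Hbar. field_simplify in Hbar; lra.
Qed.

(* The mixed and [(s - s0)^2] terms are only bounded: the operator does not see them. *)
Definition lower_expansion (V : R -> R -> R) (z0 s0 a b c : R) : Prop :=
  forall k, 0 < k -> exists d K, 0 < d /\ 0 <= K /\
    forall z s, Rabs (z - z0) < d -> Rabs (s - s0) < d ->
      a * (z - z0) + b * (s - s0) + (c - k) * (z - z0) ^ 2
      - K * (Rabs (z - z0) * Rabs (s - s0)) - K * (s - s0) ^ 2 <= V z s - V z0 s0.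

Lemma lower_expansion_of_derivatives (V V1 V2 : R -> R -> R) (Vs : R -> R) z0 s0 d0 :
  0 < d0 ->
  (forall z s, Rabs (s - s0) < d0 -> is_derive (fun z => V z s) z (V1 z s)) ->
  (forall z s, Rabs (s - s0) < d0 -> is_derive (fun z => V1 z s) z (V2 z s)) ->
  (forall s, Rabs (s - s0) < d0 -> is_derive (V z0) s (Vs s)) ->
  continuity_2d_pt V2 z0 s0 -> ex_derive (V1 z0) s0 -> ex_derive Vs s0 ->
  lower_expansion V z0 s0 (V1 z0 s0) (Vs s0) (V2 z0 s0 / 2).
Proof.
  intros Hd0 HV HV1 HVs HV2c HV1s HVss k Hk.
  destruct (HV2c (mkposreal (2 * k) ltac:(lra))) as [dc Hdc]. simpl in Hdc.
  destruct (derive_local_lipschitz _ s0 HVss) as (d2 & K2 & Hd2 & HK2 & HL2).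
  destruct (derive_local_lipschitz _ s0 HV1s) as (d3 & K3 & Hd3 & HK3 & HL3).
  set (d := Rmin (Rmin dc d0) (Rmin d2 d3)).
  assert (Hd : 0 < d) by (repeat apply Rmin_pos; try lra; apply cond_pos).
  assert (d <= dc /\ d <= d0 /\ d <= d2 /\ d <= d3) as (Hdc' & Hd0' & Hd2' & Hd3').
  { unfold d. pose proof (Rmin_l dc d0). pose proof (Rmin_r dc d0).
    pose proof (Rmin_l d2 d3). pose proof (Rmin_r d2 d3).
    pose proof (Rmin_l (Rmin dc d0) (Rmin d2 d3)). pose proof (Rmin_r (Rmin dc d0) (Rmin d2 d3)).
    lra. }
  clearbody d. exists d, (K3 + K2). repeat split; [lra|lra|].
  intros z s Hz Hs.
  assert (Hz2 : (V2 z0 s0 - 2 * k) / 2 * (z - z0) ^ 2 <= V z s - V z0 s - V1 z0 s * (z - z0)).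
  { apply (taylor2_lower (fun z => V z s) (fun z => V1 z s) (fun z => V2 z s)).
    - intros x. apply HV. lra.
    - intros x. apply HV1. lra.
    - intros c Hc. pose proof (Rabs_between_le _ _ _ Hc).
      specialize (Hdc c s ltac:(lra) ltac:(lra)). apply Rabs_lt_between in Hdc. lra. }
  assert (Hcross : Rabs ((V1 z0 s - V1 z0 s0) * (z - z0))
                   <= K3 * (Rabs (z - z0) * Rabs (s - s0))).
  { rewrite Rabs_mult, Rmult_comm, <- Rmult_assoc, (Rmult_comm K3), Rmult_assoc.
    apply Rmult_le_compat_l; [apply Rabs_pos|]. apply HL3. lra. }
  apply Rabs_le_between in Hcross.
  pose proof (lipschitz_derivative_lower (V z0) Vs s0 (Rmin d0 d2) K2 HK2) as Hs2.
  specialize (Hs2 ltac:(intros s' Hs'; apply HVs; apply Rmin_Rgt in Hs'; lra)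
                   ltac:(intros s' Hs'; apply HL2; apply Rmin_Rgt in Hs'; lra) s
                   ltac:(apply Rmin_Rgt; lra)).
  pose proof (Rabs_pos (z - z0)). pose proof (Rabs_pos (s - s0)). pose proof (pow2_ge_0 (s - s0)).
  assert (0 <= K2 * (Rabs (z - z0) * Rabs (s - s0))) by (apply Rmult_le_pos; nra).
  assert (0 <= K3 * (s - s0) ^ 2) by (apply Rmult_le_pos; nra).
  nra.
Qed.

(* In the characteristic variable [z = x - t + z1], [(z - z0)^2] becomes a paraboloid with a
   cross term, and Young's inequality turns the mixed error into a small multiple of
   [(x - x0)^2] plus a multiple of [(t - t0)^2]. *)
Lemma paraboloid_supersol_of_lower_expansion eps V e z1 tau x0 t0 a b c :
  0 <= eps -> lower_expansion V (x0 - t0 + z1) (t0 + tau) a b c ->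
  paraboloid_supersol eps (2 * eps * c - b)
    (fun x t => e - V (x - t + z1) (t + tau)) x0 t0.
Proof.
  intros He Hexp k Hk.
  set (k' := k / (4 * eps + 1)).
  assert (Hk' : 0 < k') by (apply Rdiv_lt_0_compat; lra).
  assert (Hek' : 2 * eps * k' <= k / 2).
  { unfold k'. apply (Rmult_le_reg_r (4 * eps + 1)); [lra|]. field_simplify; nra. }
  destruct (Hexp k' Hk') as (d & K & Hd & HK & Hlow).
  set (th := k / (4 * eps * K + 1)).
  assert (Hth : 0 < th) by (apply Rdiv_lt_0_compat; nra).
  assert (HeKth : 2 * eps * K * th <= k / 2).
  { unfold th. apply (Rmult_le_reg_r (4 * eps * K + 1)); [nra|]. field_simplify; nra. }
  clearbody k' th.
  exists (- a), (- (c - k') + K * th), (a - b), (- (c - k') + K * (2 + / th)),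
    (2 * (c - k')), (d / 2).
  repeat split; [lra|nra|].
  intros x t Hx Ht.
  set (dx := x - x0) in *. set (dt := t - t0) in *.
  assert (Hz : Rabs (x - t + z1 - (x0 - t0 + z1)) < d).
  { replace (x - t + z1 - (x0 - t0 + z1)) with (dx + - dt) by (unfold dx, dt; ring).
    eapply Rle_lt_trans; [apply Rabs_triang|]. rewrite Rabs_Ropp. lra. }
  assert (Hs : Rabs (t + tau - (t0 + tau)) < d)
    by (replace (t + tau - (t0 + tau)) with dt by (unfold dt; ring); lra).
  specialize (Hlow _ _ Hz Hs).
  replace (x - t + z1 - (x0 - t0 + z1)) with (dx - dt) in Hlow by (unfold dx, dt; ring).
  replace (t + tau - (t0 + tau)) with dt in Hlow by (unfold dt; ring).
  unfold paraboloid. fold dx dt. clearbody dx dt.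
  assert (K * (Rabs (dx - dt) * Rabs dt) <= K * (th * dx ^ 2 + (1 + / th) * dt ^ 2))
    by (apply Rmult_le_compat_l; [lra|now apply mixed_term_le]).
  nra.
Qed.

Definition gauss (v : R) : R := exp (- (v * v)).
Definition gauss_int (a : R) : R := RInt gauss 0 a.

Lemma gauss_pos v : 0 < gauss v.
Proof. apply exp_pos. Qed.

Lemma gauss_le_1 v : gauss v <= 1.
Proof.
  unfold gauss. rewrite <- exp_0. apply exp_le_compat.
  pose proof (Rle_0_sqr v). unfold Rsqr in *. lra.
Qed.

Lemma is_derive_gauss (v : R) : is_derive gauss v (- 2 * v * gauss v).
Proof. unfold gauss. auto_derive; auto. ring. Qed.

Lemma ex_RInt_gauss a b : ex_RInt gauss a b.
Proof.
  apply (@ex_RInt_continuous R_CompleteNormedModule). intros v _. apply continuous_of_derive.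
  eexists. apply is_derive_gauss.
Qed.

Lemma is_derive_gauss_int (a : R) : is_derive gauss_int a (gauss a).
Proof.
  apply (@is_derive_RInt R_CompleteNormedModule gauss gauss_int 0).
  - apply filter_forall. intros b. apply (@RInt_correct R_CompleteNormedModule), ex_RInt_gauss.
  - apply continuous_of_derive. eexists. apply is_derive_gauss.
Qed.

Lemma gauss_int_diff a b : gauss_int b - gauss_int a = RInt gauss a b.
Proof.
  unfold gauss_int.
  rewrite <- (@RInt_Chasles R_CompleteNormedModule gauss 0 a b) by apply ex_RInt_gauss.
  unfold plus; simpl. ring.
Qed.

Lemma gauss_int_le a b : a <= b -> gauss_int a <= gauss_int b.
Proof.
  intros H. enough (0 <= gauss_int b - gauss_int a) by lra. rewrite gauss_int_diff.
  apply RInt_ge_0; auto. apply ex_RInt_gauss. intros; left; apply gauss_pos.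
Qed.

Lemma gauss_int_0 : gauss_int 0 = 0.
Proof. exact (@RInt_point R_CompleteNormedModule 0 gauss). Qed.

Lemma gauss_int_tail a b : 0 <= b -> b <= a ->
  b * (gauss_int a - gauss_int b) <= (gauss b - gauss a) / 2.
Proof.
  intros Hb Hba. rewrite gauss_int_diff.
  assert (Hcont : forall f : R -> R, (forall v, ex_derive f v) -> ex_RInt f b a).
  { intros f Hf. apply (@ex_RInt_continuous R_CompleteNormedModule).
    intros v _. now apply continuous_of_derive. }
  assert (Hmom : RInt (fun v => v * gauss v) b a = (gauss b - gauss a) / 2).
  { apply (@is_RInt_unique R_CompleteNormedModule).
    replace ((gauss b - gauss a) / 2) with (- gauss a / 2 - - gauss b / 2) by field.
    apply (@is_RInt_derive R_CompleteNormedModule (fun v => - gauss v / 2)).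
    - intros v _. unfold gauss. auto_derive; auto. field.
    - intros v _. apply continuous_of_derive. unfold gauss. auto_derive; auto. }
  rewrite <- Hmom.
  replace (b * RInt gauss b a) with (RInt (fun v => b * gauss v) b a)
    by exact (@RInt_scal R_CompleteNormedModule gauss b a b (ex_RInt_gauss b a)).
  apply RInt_le; auto.
  - apply Hcont. intros v. unfold gauss. auto_derive; auto.
  - apply Hcont. intros v. unfold gauss. auto_derive; auto.
  - intros v Hv. apply Rmult_le_compat_r; [left; apply gauss_pos|lra].
Qed.

(* The classical computation of the Gaussian integral: [gauss_int x ^ 2 + gauss_arc x]
   has derivative zero and equals [atan 1] at [x = 0]. *)
Definition gauss_arc (x : R) : R :=
  RInt (fun v => exp (- (x * x) * (1 + v * v)) / (1 + v * v)) 0 1.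

Lemma is_derive_gauss_arc (x : R) : is_derive gauss_arc x (- 2 * gauss x * gauss_int x).
Proof.
  unfold gauss_arc.
  assert (HD : forall y v, Derive (fun z => exp (- (z * z) * (1 + v * v)) / (1 + v * v)) y
                          = - 2 * y * exp (- (y * y) * (1 + v * v))).
  { intros y v. apply is_derive_unique. auto_derive; [nra|field; nra]. }
  replace (- 2 * gauss x * gauss_int x) with
    (RInt (fun v => Derive (fun y => exp (- (y * y) * (1 + v * v)) / (1 + v * v)) x) 0 1).
  - apply is_derive_RInt_param.
    + apply filter_forall. intros y v _. auto_derive. nra.
    + intros v _. apply continuity_2d_pt_ext
        with (f := fun y v => - 2 * y * exp (- (y * y) * (1 + v * v))).
      { intros. now rewrite HD. }
      apply continuity_2d_pt_mult.
      * apply continuity_2d_pt_mult; [apply continuity_2d_pt_const|apply continuity_2d_pt_id1].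
      * apply continuity_1d_2d_pt_comp.
        { apply derivable_continuous_pt, derivable_pt_exp. }
        continuity_2d.
    + apply filter_forall. intros y. apply (@ex_RInt_continuous R_CompleteNormedModule).
      intros v _. apply continuous_of_derive. auto_derive. nra.
  - rewrite (@RInt_ext R_CompleteNormedModule _
               (fun v => (- 2 * gauss x) * (x * gauss (x * v + 0)))).
    + rewrite (@RInt_scal R_CompleteNormedModule), (@RInt_comp_lin R_CompleteNormedModule)
        by apply ex_RInt_gauss || (apply (@ex_RInt_continuous R_CompleteNormedModule);
           intros v _; apply continuous_of_derive; unfold gauss; auto_derive; auto).
      unfold gauss_int. now rewrite Rmult_0_r, Rplus_0_r, Rmult_1_r, Rplus_0_r.
    + intros v _. rewrite HD. unfold gauss.
      replace (- (x * x) * (1 + v * v)) with (- (x * x) + - ((x * v + 0) * (x * v + 0))) by ring.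
      rewrite exp_plus. apply Rminus_diag_uniq. ring.
Qed.

Lemma gauss_int_sqr_le a : gauss_int a ^ 2 <= PI / 4.
Proof.
  set (F := fun x => gauss_int x ^ 2 + gauss_arc x).
  assert (HF : forall x, is_derive F x 0).
  { intros x. replace 0 with (2 * gauss_int x * gauss x + - 2 * gauss x * gauss_int x) by ring.
    apply (@is_derive_plus R_AbsRing); [|apply is_derive_gauss_arc].
    eapply is_derive_val; [apply (is_derive_pow gauss_int 2 x _ (is_derive_gauss_int x))|].
    simpl. ring. }
  assert (HF0 : F 0 = PI / 4).
  { unfold F, gauss_arc. rewrite gauss_int_0, <- atan_1.
    rewrite (@RInt_ext R_CompleteNormedModule _ (fun v => / (1 + v ^ 2))).
    - rewrite (@is_RInt_unique R_CompleteNormedModule _ 0 1 (atan 1 - atan 0)).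
      + rewrite atan_0. simpl. ring.
      + apply (@is_RInt_derive R_CompleteNormedModule atan).
        * intros v _. apply is_derive_Reals, derivable_pt_lim_atan.
        * intros v _. apply continuous_of_derive. auto_derive. nra.
    - intros v _. replace (- (0 * 0) * (1 + v * v)) with 0 by ring. rewrite exp_0. simpl.
      field. nra. }
  assert (Hconst : F a = F 0).
  { destruct (MVT_gen F 0 a (fun _ => 0)) as [c [_ Hc]].
    - intros; apply HF.
    - intros y _. apply continuity_pt_filterlim, continuous_of_derive. eexists; apply HF.
    - lra. }
  assert (Harc : 0 <= gauss_arc a).
  { unfold gauss_arc. apply RInt_ge_0; [lra| |].
    - apply (@ex_RInt_continuous R_CompleteNormedModule). intros v _.
      apply continuous_of_derive. auto_derive. nra.
    - intros v _. apply Rmult_le_pos; [left; apply exp_pos|].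
      left; apply Rinv_0_lt_compat. nra. }
  rewrite HF0 in Hconst. unfold F in Hconst. lra.
Qed.

Lemma gauss_int_abs_le a : Rabs (gauss_int a) <= sqrt PI / 2.
Proof.
  rewrite <- (Rabs_pos_eq (sqrt PI / 2)) by (pose proof (sqrt_pos PI); lra).
  apply Rsqr_le_abs_0. unfold Rsqr.
  replace (sqrt PI / 2 * (sqrt PI / 2)) with (PI / 4)
    by (rewrite <- (sqrt_sqrt PI) at 1 by (left; apply PI_RGT_0); field).
  pose proof (gauss_int_sqr_le a). simpl in *. lra.
Qed.

(* [heat_ramp z r] is the Gaussian average [(r sqrt PI)^-1 \int_0^1 y exp (-((z - y) / r)^2) dy]
   of the truncated ramp [y 1_[0,1](y)], integrated in closed form. *)
Definition heat_ramp (z r : R) : R :=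
  (z * (gauss_int (z / r) - gauss_int ((z - 1) / r))
   + r / 2 * (gauss (z / r) - gauss ((z - 1) / r))) / sqrt PI.

Definition heat_ramp_dz (z r : R) : R :=
  (gauss_int (z / r) - gauss_int ((z - 1) / r) - gauss ((z - 1) / r) / r) / sqrt PI.

Definition heat_ramp_dzz (z r : R) : R :=
  (gauss (z / r) / r - gauss ((z - 1) / r) / r
   + 2 * (z - 1) * gauss ((z - 1) / r) / (r * r * r)) / sqrt PI.

Lemma sqrt_PI_pos : 0 < sqrt PI.
Proof. apply sqrt_lt_R0, PI_RGT_0. Qed.

Lemma one_lt_sqrt_PI : 1 < sqrt PI.
Proof.
  rewrite <- sqrt_1. apply sqrt_lt_1_alt. pose proof PI_RGT_0. pose proof PI2_3_2. lra.
Qed.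

Lemma Derive_gauss_int a : Derive gauss_int a = gauss a.
Proof. apply is_derive_unique, is_derive_gauss_int. Qed.

Lemma Derive_gauss a : Derive gauss a = - 2 * a * gauss a.
Proof. apply is_derive_unique, is_derive_gauss. Qed.

Lemma ex_derive_gauss_int a : ex_derive gauss_int a.
Proof. eexists; apply is_derive_gauss_int. Qed.

Lemma ex_derive_gauss a : ex_derive gauss a.
Proof. eexists; apply is_derive_gauss. Qed.

Ltac derive_heat_ramp :=
  pose proof sqrt_PI_pos;
  auto_derive; repeat split; try apply ex_derive_gauss_int; try apply ex_derive_gauss; auto;
  rewrite ?Derive_gauss_int, ?Derive_gauss.

Lemma is_derive_heat_ramp_z z r : 0 < r ->
  is_derive (fun z => heat_ramp z r) z (heat_ramp_dz z r).
Proof.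
  intros Hr. unfold heat_ramp, heat_ramp_dz. derive_heat_ramp.
  unfold Rdiv, Rminus. field. lra.
Qed.

Lemma is_derive_heat_ramp_dz z r : 0 < r ->
  is_derive (fun z => heat_ramp_dz z r) z (heat_ramp_dzz z r).
Proof.
  intros Hr. unfold heat_ramp_dz, heat_ramp_dzz. derive_heat_ramp.
  unfold Rdiv, Rminus. field. lra.
Qed.

(* The heat equation [H_tau = H_zz] in the width [r = 2 sqrt tau]. *)
Lemma is_derive_heat_ramp_r z r : 0 < r ->
  is_derive (fun r => heat_ramp z r) r (r / 2 * heat_ramp_dzz z r).
Proof.
  intros Hr. unfold heat_ramp, heat_ramp_dzz. derive_heat_ramp; try lra.
  unfold Rdiv, Rminus. field. lra.
Qed.

Lemma gauss_window_bounds z r : 0 < r ->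
  0 <= gauss_int (z / r) - gauss_int ((z - 1) / r) <= sqrt PI.
Proof.
  intros Hr. split.
  - enough (gauss_int ((z - 1) / r) <= gauss_int (z / r)) by lra.
    apply gauss_int_le. apply Rmult_le_compat_r; [left; now apply Rinv_0_lt_compat|lra].
  - pose proof (gauss_int_abs_le (z / r)) as Ha. pose proof (gauss_int_abs_le ((z - 1) / r)) as Hb.
    apply Rabs_le_between in Ha, Hb. lra.
Qed.

Lemma gauss_window_right z r : 0 < r -> 1 < z ->
  z * (gauss_int (z / r) - gauss_int ((z - 1) / r))
    + r / 2 * (gauss (z / r) - gauss ((z - 1) / r))
  <= gauss_int (z / r) - gauss_int ((z - 1) / r) /\
  (z - 1) * (gauss_int (z / r) - gauss_int ((z - 1) / r)) <= r / 2 /\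
  gauss_int (z / r) - gauss_int ((z - 1) / r) <= sqrt PI / 2.
Proof.
  intros Hr Hz.
  assert (Hb : 0 <= (z - 1) / r) by (apply Rdiv_le_0_compat; lra).
  assert (Hba : (z - 1) / r <= z / r)
    by (apply Rmult_le_compat_r; [left; now apply Rinv_0_lt_compat|lra]).
  pose proof (gauss_int_tail _ _ Hb Hba) as Htail.
  apply (Rmult_le_compat_l r) in Htail; [|lra].
  replace (r * ((z - 1) / r * (gauss_int (z / r) - gauss_int ((z - 1) / r))))
    with ((z - 1) * (gauss_int (z / r) - gauss_int ((z - 1) / r))) in Htail by (field; lra).
  pose proof (gauss_le_1 ((z - 1) / r)). pose proof (gauss_pos (z / r)).
  pose proof (gauss_int_abs_le (z / r)) as Ha. apply Rabs_le_between in Ha.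
  assert (0 <= gauss_int ((z - 1) / r))
    by (rewrite <- gauss_int_0; now apply gauss_int_le).
  repeat split; nra.
Qed.

Lemma heat_ramp_le z r : 0 < r -> heat_ramp z r <= Rabs z + r / (2 * sqrt PI).
Proof.
  intros Hr. pose proof sqrt_PI_pos. destruct (gauss_window_bounds z r Hr) as [HM0 HM].
  pose proof (gauss_le_1 (z / r)). pose proof (gauss_pos ((z - 1) / r)).
  unfold heat_ramp. apply (Rmult_le_reg_r (sqrt PI)); [lra|].
  unfold Rdiv at 1. rewrite Rmult_assoc, Rinv_l, Rmult_1_r by lra.
  replace ((Rabs z + r / (2 * sqrt PI)) * sqrt PI) with (Rabs z * sqrt PI + r / 2) by (field; lra).
  assert (z * (gauss_int (z / r) - gauss_int ((z - 1) / r)) <= Rabs z * sqrt PI).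
  { eapply Rle_trans; [apply Rmult_le_compat_r; [apply HM0|apply Rle_abs]|].
    apply Rmult_le_compat_l; [apply Rabs_pos|lra]. }
  nra.
Qed.

Lemma heat_ramp_le_datum z r L psi : 0 < r -> 0 < L -> 0 <= psi ->
  (0 <= z <= 1 -> z <= psi) -> (1 <= z -> 1 - L * (z - 1) <= psi) ->
  heat_ramp z r <= psi + r * (1 / 2 + L) / sqrt PI.
Proof.
  intros Hr HL Hpsi Hmid Hright. pose proof sqrt_PI_pos.
  destruct (gauss_window_bounds z r Hr) as [HM0 HM].
  set (M := gauss_int (z / r) - gauss_int ((z - 1) / r)) in *.
  pose proof (gauss_le_1 (z / r)). pose proof (gauss_pos ((z - 1) / r)).
  unfold heat_ramp. fold M. apply (Rmult_le_reg_r (sqrt PI)); [lra|].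
  unfold Rdiv at 1. rewrite Rmult_assoc, Rinv_l, Rmult_1_r by lra.
  replace ((psi + r * (1 / 2 + L) / sqrt PI) * sqrt PI) with (psi * sqrt PI + r * (1 / 2 + L))
    by (field; lra).
  destruct (Rle_or_lt z 0) as [Hz|Hz]; [nra|].
  destruct (Rle_or_lt z 1) as [Hz1|Hz1]; [specialize (Hmid ltac:(lra)); nra|].
  destruct (gauss_window_right z r Hr Hz1) as (Hwin & Htail & Hhalf). fold M in Hwin, Htail, Hhalf.
  destruct (Rle_or_lt (L * (z - 1)) (1 / 2)) as [HLz|HLz].
  - specialize (Hright ltac:(lra)). nra.
  - assert (M <= r * L).
    { apply (Rmult_le_reg_l (z - 1)); [lra|]. nra. }
    nra.
Qed.

Lemma heat_ramp_0 r : 0 < r -> heat_ramp 0 r = r / 2 * (1 - exp (- (1 / r ^ 2))) / sqrt PI.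
Proof.
  intros Hr. unfold heat_ramp, gauss. rewrite Rdiv_0_l, Rmult_0_r, Ropp_0, exp_0.
  replace (- ((0 - 1) / r * ((0 - 1) / r))) with (- (1 / r ^ 2)) by (field; lra).
  field. apply Rgt_not_eq, sqrt_PI_pos.
Qed.

(* Solution of [V_s = eps V_zz]: the heat kernel at time [s] has width [sqrt (4 eps s)]. *)
Definition ramp_flow (eps z s : R) : R := heat_ramp z (sqrt (4 * eps * s)).

Lemma sqrt_4_pos eps s : 0 < eps -> 0 < s -> 0 < sqrt (4 * eps * s).
Proof. intros; apply sqrt_lt_R0; nra. Qed.

Lemma is_derive_ramp_flow_s eps z s : 0 < eps -> 0 < s ->
  is_derive (ramp_flow eps z) s (eps * heat_ramp_dzz z (sqrt (4 * eps * s))).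
Proof.
  intros He Hs. pose proof (sqrt_4_pos eps s He Hs) as Hr.
  assert (Hd : is_derive (fun s => sqrt (4 * eps * s)) s (2 * eps / sqrt (4 * eps * s))).
  { auto_derive; [nra|]. field. lra. }
  eapply is_derive_val.
  - apply (is_derive_comp (fun r => heat_ramp z r)); [|apply Hd].
    now apply is_derive_heat_ramp_r.
  - unfold scal; simpl; unfold mult; simpl. field. lra.
Qed.

Lemma continuity_pt_gauss_int a : continuity_pt gauss_int a.
Proof. apply continuity_pt_filterlim, continuous_of_derive, ex_derive_gauss_int. Qed.

Ltac continuity_2d_heat :=
  repeat first
   [ apply continuity_2d_pt_plus | apply continuity_2d_pt_minus
   | apply continuity_2d_pt_mult | apply continuity_2d_pt_opp
   | apply continuity_2d_pt_id1 | apply continuity_2d_pt_id2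
   | apply continuity_2d_pt_const | apply continuity_2d_pt_inv
   | apply (continuity_1d_2d_pt_comp exp); [apply derivable_continuous_pt, derivable_pt_exp|]
   | apply (continuity_1d_2d_pt_comp gauss_int); [apply continuity_pt_gauss_int|]
   | apply (continuity_1d_2d_pt_comp sqrt) ];
  cbv beta;
  try (apply continuity_pt_sqrt; nra);
  try (apply Rgt_not_eq; repeat apply Rmult_lt_0_compat; lra).

Lemma continuity_2d_pt_heat_ramp_dzz eps z0 s0 : 0 < eps -> 0 < s0 ->
  continuity_2d_pt (fun z s => heat_ramp_dzz z (sqrt (4 * eps * s))) z0 s0.
Proof.
  intros He Hs. pose proof sqrt_PI_pos. pose proof (sqrt_4_pos eps s0 He Hs).
  unfold heat_ramp_dzz, gauss, Rdiv, Rminus. continuity_2d_heat.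
Qed.

Lemma continuity_2d_pt_ramp_flow eps tau x0 t0 : 0 < eps -> 0 < t0 + tau ->
  continuity_2d_pt (fun x t => ramp_flow eps (x - t + 1) (t + tau)) x0 t0.
Proof.
  intros He Hs. pose proof sqrt_PI_pos. pose proof (sqrt_4_pos eps (t0 + tau) He Hs).
  unfold ramp_flow, heat_ramp, gauss, Rdiv, Rminus. continuity_2d_heat.
Qed.

Lemma ex_derive_heat_ramp_dz_s eps z s : 0 < eps -> 0 < s ->
  ex_derive (fun s => heat_ramp_dz z (sqrt (4 * eps * s))) s.
Proof.
  intros He Hs. pose proof sqrt_PI_pos. pose proof (sqrt_4_pos eps s He Hs).
  unfold heat_ramp_dz. auto_derive; repeat split; try apply ex_derive_gauss_int;
    try apply ex_derive_gauss; nra.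
Qed.

Lemma ex_derive_heat_ramp_dzz_s eps z s : 0 < eps -> 0 < s ->
  ex_derive (fun s => eps * heat_ramp_dzz z (sqrt (4 * eps * s))) s.
Proof.
  intros He Hs. pose proof sqrt_PI_pos. pose proof (sqrt_4_pos eps s He Hs).
  unfold heat_ramp_dzz, gauss. auto_derive; repeat split; try nra;
    apply Rgt_not_eq; repeat apply Rmult_lt_0_compat; lra.
Qed.

Lemma ramp_flow_supersol eps tau e x0 t0 : 0 < eps -> 0 < t0 + tau ->
  paraboloid_supersol eps 0 (fun x t => e - ramp_flow eps (x - t + 1) (t + tau)) x0 t0.
Proof.
  intros He Hs.
  set (V2 := fun z s => heat_ramp_dzz z (sqrt (4 * eps * s))).
  replace 0 with (2 * eps * (V2 (x0 - t0 + 1) (t0 + tau) / 2)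
                  - eps * V2 (x0 - t0 + 1) (t0 + tau)) by field.
  eapply paraboloid_supersol_of_lower_expansion; [lra|].
  assert (Hpos : forall s, Rabs (s - (t0 + tau)) < (t0 + tau) / 2 -> 0 < s)
    by (intros s Habs; apply Rabs_lt_between in Habs; lra).
  apply (lower_expansion_of_derivatives (ramp_flow eps)
           (fun z s => heat_ramp_dz z (sqrt (4 * eps * s))) V2
           (fun s => eps * V2 (x0 - t0 + 1) s) _ _ ((t0 + tau) / 2)); try lra.
  - intros z s Hs'. apply is_derive_heat_ramp_z, sqrt_4_pos; auto.
  - intros z s Hs'. apply is_derive_heat_ramp_dz, sqrt_4_pos; auto.
  - intros s Hs'. apply is_derive_ramp_flow_s; auto.
  - now apply continuity_2d_pt_heat_ramp_dzz.
  - now apply ex_derive_heat_ramp_dz_s.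
  - now apply ex_derive_heat_ramp_dzz_s.
Qed.

Lemma ramp_flow_growth eps tau : 0 < eps -> 0 < tau -> exists C, forall x t, 0 <= t ->
  ramp_flow eps (x - t + 1) (t + tau) <= C * (1 + Rabs x + t).
Proof.
  intros He Htau. exists (2 + 4 * eps * (1 + tau)). intros x t Ht.
  pose proof (heat_ramp_le (x - t + 1) _ (sqrt_4_pos eps (t + tau) He ltac:(lra))) as Hle.
  pose proof (sqrt_le_1_plus (4 * eps * (t + tau)) ltac:(nra)).
  pose proof (sqrt_pos (4 * eps * (t + tau))). pose proof one_lt_sqrt_PI.
  assert (sqrt (4 * eps * (t + tau)) / (2 * sqrt PI) <= sqrt (4 * eps * (t + tau))).
  { unfold Rdiv. rewrite <- (Rmult_1_r (sqrt (4 * eps * (t + tau)))) at 2.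
    apply Rmult_le_compat_l; [lra|]. rewrite <- Rinv_1. apply Rinv_le_contravar; lra. }
  assert (Rabs (x - t + 1) <= Rabs x + t + 1).
  { unfold Rminus. eapply Rle_trans; [apply Rabs_triang|]. rewrite Rabs_R1.
    eapply Rle_trans; [apply Rplus_le_compat_r, Rabs_triang|].
    rewrite Rabs_Ropp, (Rabs_pos_eq t); lra. }
  pose proof (Rabs_pos x).
  assert (0 <= eps * Rabs x) by (apply Rmult_le_pos; lra).
  assert (0 <= eps * tau * (Rabs x + t)) by (apply Rmult_le_pos; nra).
  unfold ramp_flow. lra.
Qed.

Lemma visc_solution_ge_ramp_flow g ueps eps L tau : 0 < eps -> 0 < tau -> 0 < L ->
  (forall x y, Rabs (g x - g y) <= L * Rabs (x - y)) ->
  (forall x, g x >= g (-1)) -> (forall x, -1 <= x <= 0 -> g x >= x + 1 + g (-1)) ->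
  visc_solution eps g ueps -> forall x t, 0 <= t ->
  g (-1) - sqrt (4 * eps * tau) * (1 / 2 + L) / sqrt PI
    + ramp_flow eps (x - t + 1) (t + tau) <= ueps x t.
Proof.
  intros He Htau HL HgL Hmin Hlin (Hc & H0 & _ & Hsup & Cu & HCu) x1 t1 Ht1.
  set (c := sqrt (4 * eps * tau) * (1 / 2 + L) / sqrt PI - g (-1)).
  enough (- ueps x1 t1 <= c - ramp_flow eps (x1 - t1 + 1) (t1 + tau)) by (unfold c in *; lra).
  apply (visc_comparison eps (fun x t => - ueps x t)
           (fun x t => c - ramp_flow eps (x - t + 1) (t + tau))); auto; try lra.
  - intros; apply cont2_within_opp; auto.
  - intros x t Ht. apply cont2_within_of_cont2, continuity_2d_pt_cont2, continuity_2d_pt_minus;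
      [apply continuity_2d_pt_const|apply continuity_2d_pt_ramp_flow; lra].
  - destruct (ramp_flow_growth eps tau He Htau) as [Cw HCw].
    exists (Cu + Rabs c + Cw). intros x t Ht.
    pose proof (linear_growth_abs ueps Cu x t Ht (HCu x t Ht) c).
    pose proof (HCw x t Ht). pose proof (Rle_abs (- ueps x t)). pose proof (Rle_abs (- c)).
    rewrite !Rabs_Ropp in *. lra.
  - now apply visc_supersol_opp.
  - intros x0 t0 Ht0. apply ramp_flow_supersol; lra.
  - intros x. rewrite H0.
    assert (ramp_flow eps (x - 0 + 1) (0 + tau)
            <= g x - g (-1) + sqrt (4 * eps * tau) * (1 / 2 + L) / sqrt PI); [|unfold c; lra].
    unfold ramp_flow. rewrite Rplus_0_l, Rminus_0_r.
    apply heat_ramp_le_datum; auto.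
    + now apply sqrt_4_pos.
    + specialize (Hmin x). lra.
    + intros Hz. specialize (Hlin x ltac:(lra)). lra.
    + intros Hz. specialize (Hlin 0 ltac:(lra)). specialize (HgL x 0).
      apply Rabs_le_between in HgL. rewrite Rabs_pos_eq in HgL; lra.
Qed.

Lemma heat_ramp_0_ge r r0 b : 0 < r0 -> r0 <= r -> 0 <= b -> b <= 1 / r ^ 2 ->
  r0 / 2 * (1 - exp (- b)) / sqrt PI <= heat_ramp 0 r.
Proof.
  intros Hr0 Hr Hb Hbr. pose proof sqrt_PI_pos.
  rewrite heat_ramp_0 by lra. unfold Rdiv at 1 3.
  apply Rmult_le_compat_r; [left; now apply Rinv_0_lt_compat|].
  pose proof (exp_le_compat (- (1 / r ^ 2)) (- b) ltac:(lra)).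
  pose proof (exp_le_compat (- b) 0 ltac:(lra)). rewrite exp_0 in *.
  apply Rmult_le_compat; lra.
Qed.

Lemma sqrt_4_mul eps s : 0 <= eps -> 0 <= s -> sqrt (4 * eps * s) = 2 * sqrt eps * sqrt s.
Proof.
  intros He Hs. rewrite !sqrt_mult by lra. replace 4 with (2 ^ 2) by ring.
  rewrite sqrt_pow2; lra.
Qed.

Lemma heat_ramp_0_shifted eps tau : 0 < eps < 1 / 4 -> 0 <= tau <= (1 - 4 * eps) / (8 * eps) ->
  sqrt eps * (1 - exp (- (2 / (1 + 4 * eps)))) / sqrt PI
    <= heat_ramp 0 (sqrt (4 * eps * (1 + tau))).
Proof.
  intros He [Htau0 Htau1]. pose proof (sqrt_lt_R0 eps ltac:(lra)) as Hse.
  replace (sqrt eps) with (2 * sqrt eps / 2) at 1 by field.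
  apply heat_ramp_0_ge; [lra| |apply Rlt_le, Rdiv_lt_0_compat; lra|].
  - rewrite sqrt_4_mul by lra. rewrite <- (Rmult_1_r (2 * sqrt eps)) at 1.
    apply Rmult_le_compat_l; [lra|]. rewrite <- sqrt_1 at 1. apply sqrt_le_1_alt. lra.
  - rewrite <- Rsqr_pow2, Rsqr_sqrt by nra.
    apply Rmult_le_reg_r with (4 * eps * (1 + tau)); [nra|].
    apply (Rmult_le_reg_r (1 + 4 * eps)); [lra|]. field_simplify; [|lra|nra].
    apply (Rmult_le_compat_l (8 * eps)) in Htau1; [|lra].
    replace (8 * eps * ((1 - 4 * eps) / (8 * eps))) with (1 - 4 * eps) in Htau1 by (field; lra).
    nra.
Qed.

(* Since [2 / (1 + 4 eps) > 1], the bound of [heat_ramp_0_shifted] exceeds the target by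
   [sqrt eps (exp (-1) - exp (-2 / (1 + 4 eps))) / sqrt PI], which pays for the shift. *)
Lemma ramp_margin eps L : 0 < eps < 1 / 4 -> 0 < L -> exists tau, 0 < tau /\
  (exp 1 - 1) / (sqrt PI * exp 1) * sqrt eps
    <= heat_ramp 0 (sqrt (4 * eps * (1 + tau))) - sqrt (4 * eps * tau) * (1 / 2 + L) / sqrt PI.
Proof.
  intros He HL. pose proof sqrt_PI_pos. pose proof (sqrt_lt_R0 eps ltac:(lra)) as Hse.
  remember (exp (- 1) - exp (- (2 / (1 + 4 * eps)))) as gap eqn:Egap.
  assert (Hgap : 0 < gap).
  { assert (1 < 2 / (1 + 4 * eps))
      by (apply (Rmult_lt_reg_r (1 + 4 * eps)); [lra|]; field_simplify; lra).
    pose proof (exp_increasing (- (2 / (1 + 4 * eps))) (- 1) ltac:(lra)). lra. }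
  remember (gap / (1 + 2 * L)) as kap eqn:Ekap.
  assert (Hkap : 0 < kap) by (rewrite Ekap; apply Rdiv_lt_0_compat; lra).
  exists (Rmin ((1 - 4 * eps) / (8 * eps)) (kap ^ 2)).
  set (tau := Rmin _ _).
  assert (Htau1 : tau <= (1 - 4 * eps) / (8 * eps)) by apply Rmin_l.
  assert (Htau2 : tau <= kap ^ 2) by apply Rmin_r.
  assert (Htau : 0 < tau) by (apply Rmin_pos; [apply Rdiv_lt_0_compat|]; nra).
  clearbody tau. split; [lra|].
  pose proof (heat_ramp_0_shifted eps tau He ltac:(lra)) as Hlow.
  assert (Hup : sqrt (4 * eps * tau) * (1 / 2 + L) <= sqrt eps * gap).
  { rewrite sqrt_4_mul by lra.
    assert (sqrt tau <= kap).
    { rewrite <- (sqrt_pow2 kap) by lra. now apply sqrt_le_1_alt. }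
    replace gap with (2 * kap * (1 / 2 + L)) by (rewrite Ekap; field; lra).
    assert (sqrt eps * (1 / 2 + L) * sqrt tau <= sqrt eps * (1 / 2 + L) * kap)
      by (apply Rmult_le_compat_l; nra).
    lra. }
  assert (Hgoal : (exp 1 - 1) / (sqrt PI * exp 1) * sqrt eps
                  = sqrt eps * (1 - exp (- 1)) / sqrt PI).
  { replace (exp (- 1)) with (/ exp 1) by (rewrite <- exp_Ropp; f_equal; lra).
    pose proof (exp_pos 1). field. lra. }
  rewrite Hgoal. rewrite Egap in Hup.
  apply (Rmult_le_compat_r (/ sqrt PI)) in Hup; [|left; now apply Rinv_0_lt_compat].
  unfold Rdiv in *. nra.
Qed.

Theorem proposition4p1 (g : R -> R) (hg : Lipschitz g)
  (hmin : forall x : R, g x >= g (-1))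
  (hlin : forall x : R, -1 <= x <= 0 -> g x >= x + 1 + g (-1))
  (u : R -> R -> R) (hu : visc_solution 0 g u)
  (eps : R) (heps : 0 < eps < 1/4)
  (ueps : R -> R -> R) (hueps : visc_solution eps g ueps) :
  Rabs (ueps 0 1 - u 0 1) = ueps 0 1 - g (-1) /\
  ueps 0 1 - g (-1) >= (exp 1 - 1) / (sqrt PI * exp 1) * sqrt eps.
Proof.
  assert (Hu : u 0 1 = g (-1)).
  { apply Rle_antisym.
    - replace (-1) with (0 - 1) by ring. apply transport_le; auto; lra.
    - apply (visc_solution_ge 0 g u); auto; try lra. intros x; specialize (hmin x); lra. }
  destruct (Lipschitz_pos g hg) as (L & HL & HgL).
  destruct (ramp_margin eps L heps HL) as (tau & Htau & Hmargin).
  pose proof (visc_solution_ge_ramp_flow g ueps eps L tau ltac:(lra) Htau HL HgL hmin hlin hueps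
                0 1 ltac:(lra)) as Hlow.
  replace (0 - 1 + 1) with 0 in Hlow by ring.
  unfold ramp_flow in Hlow.
  assert (Hpos : 0 <= (exp 1 - 1) / (sqrt PI * exp 1) * sqrt eps).
  { pose proof (exp_increasing 0 1 ltac:(lra)). rewrite exp_0 in *.
    pose proof sqrt_PI_pos. pose proof (sqrt_pos eps).
    apply Rmult_le_pos; [apply Rdiv_le_0_compat; nra|lra]. }
  rewrite Hu, Rabs_pos_eq; lra.
Qed.
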